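(* Let $n\ge2$ and let $\mathcal{S}$ be a set of two-factor interactions among factors $F_1,\dots,F_n$ such that there is no sequence of distinct factors $G_1,\dots,G_m$ ($m\ge3$) with $G_1G_2,\dots,G_{m-1}G_m,G_mG_1\in\mathcal{S}$ (i.e. the requirements graph is acyclic). If every factor appears in at most four interactions of $\mathcal{S}$, then there exists a blocked $2^n$ factorial in blocks of size four whose generator matrix has all columns nonzero (so all main effects are estimable), from which all interactions in $\mathcal{S}$ are estimable, and whose number of estimable two-factor interactions equals $\phi_{\max}=\binom n2-vw-3\binom v2$, where $n=3v+w$, $v=\lfloor n/3\rfloor$, $w\in\{0,1,2\}$.
   Context: A blocked $2^n$ factorial in blocks of size four is specified by a $2\times n$ generator matrix $X$ over $\mathrm{GF}(2)$ of rank $2$: the principal block is the row space of $X$ and the other blocks are its cosets in $\mathrm{GF}(2)^n$. An effect of a set $S$ of factors, with contrast $(-1)^{\sum_{j\in S}x_j}$, is estimable iff its contrast sums to zero over every block; equivalently $F_jF_k$ is estimable iff columns $j,k$ of $X$ differ, and the main effect of $F_j$ is estimable iff column $j$ is nonzero. *)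

From HB Require Import structures.
From mathcomp Require Import all_boot all_order all_algebra.
Set Implicit Arguments. Unset Strict Implicit. Unset Printing Implicit Defensive.
Import GRing.Theory.

(* A blocked 2^n factorial in blocks of size four: a 2 x n generator matrix
   over GF(2) of rank 2. Factors F_1..F_n are indexed by 'I_n. *)
Definition blocked_design (n : nat) (X : 'M['F_2]_(2, n)) : Prop :=
  \rank X = 2.

Definition main_estimable n (X : 'M['F_2]_(2, n)) (j : 'I_n) : bool :=
  col j X != 0%R.

Definition int_estimable n (X : 'M['F_2]_(2, n)) (j k : 'I_n) : bool :=
  col j X != col k X.

Definition is_2fi n (e : {set 'I_n}) : bool := #|e| == 2.

Definition int_estimable_set n (X : 'M['F_2]_(2, n)) (e : {set 'I_n}) : bool :=
  [exists j, exists k, [&& j \in e, k \in e & int_estimable X j k]].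

Definition num_estimable_2fi n (X : 'M['F_2]_(2, n)) : nat :=
  #|[set e : {set 'I_n} | is_2fi e && int_estimable_set X e]|.

Definition req_adj n (S : {set {set 'I_n}}) : rel 'I_n :=
  fun x y => [set x; y] \in S.

Definition req_acyclic n (S : {set {set 'I_n}}) : Prop :=
  forall s : seq 'I_n, 3 <= size s -> uniq s -> ~~ cycle (req_adj S) s.

Definition req_degree n (S : {set {set 'I_n}}) (j : 'I_n) : nat :=
  #|[set e in S | j \in e]|.

Definition phi_max (n : nat) : nat :=
  let v := n %/ 3 in let w := n %% 3 in
  'C(n, 2) - v * w - 3 * 'C(v, 2).

From HB Require Import structures.
From mathcomp Require Import all_boot all_order all_algebra.
From mathcomp Require Import zify.
Set Implicit Arguments. Unset Strict Implicit. Unset Printing Implicit Defensive.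

(* The columns of a rank-2 generator matrix with no zero column take values
   among the three nonzero vectors of GF(2)^2, i.e. they 3-colour the factors;
   F_jF_k is estimable iff F_j and F_k get different colours.  So the number
   of estimable interactions is C(n,2) - sum_c C(|class c|, 2), maximal
   (= phi_max) exactly for a balanced colouring, and the interactions of S are
   estimable iff the colouring is proper on the requirements graph.

   Using longest paths we
   find three factors t1, t2, t3 keeping at most 2, 1 and 0 neighbours outside
   them (a "good triple"); a balanced colouring of the rest extends by giving
   the triple three distinct admissible colours.  Induction on the number of
   factors, with one-factor steps below three factors, yields the colouring. *)

Lemma distinct_colours_avoiding (F1 F2 F3 : {set 'I_3}) :
  #|F1| <= 2 -> #|F2| <= 1 -> #|F3| = 0 ->
  exists c1 c2 c3, [/\ c1 \notin F1, c2 \notin F2, c3 \notin F3 &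
                       [/\ c1 != c2, c2 != c3 & c3 != c1]].
Proof.
have avoid (F : {set 'I_3}) : #|F| < 3 -> exists c, c \notin F.
  move=> F_small; have /card_gt0P[c] : 0 < #|~: F|.
    by have := cardsC F; rewrite card_ord; lia.
  by rewrite inE; exists c.
move=> F1_le F2_le F3_0.
have [c1 c1F] := avoid _ (leq_ltn_trans F1_le (ltnSn 2)).
have [c2] : exists c2, c2 \notin F2 :|: [set c1].
  by apply: avoid; rewrite (leq_ltn_trans (leq_card_setU _ _)) // cards1 addn1 ltnS.
have [c3] : exists c3, c3 \notin F3 :|: [set c1; c2].
  by apply: avoid; rewrite (leq_ltn_trans (leq_card_setU _ _)) // F3_0 cards2; case: (_ != _).
rewrite !inE !negb_or => /and3P[c3F c3c1 c3c2] /andP[c2F c2c1].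
by exists c1, c2, c3; split=> //; split; rewrite // eq_sym.
Qed.

Lemma distinct_colours_cover (c1 c2 c3 c : 'I_3) :
  [/\ c1 != c2, c2 != c3 & c3 != c1] -> (c1 == c) + (c2 == c) + (c3 == c) = 1.
Proof.
by case: c1 => [[|[|[|?]]] ?]; case: c2 => [[|[|[|?]]] ?];
   case: c3 => [[|[|[|?]]] ?]; case: c => [[|[|[|?]]] ?]; case.
Qed.

Lemma class_del n (U : {set 'I_n}) (g : 'I_n -> 'I_3) a c : a \in U ->
  #|[set x in U | g x == c]| = (g a == c) + #|[set x in U :\ a | g x == c]|.
Proof.
move=> aU; rewrite (cardsD1 a) inE aU /=; congr (_ + _).
by apply: eq_card => x; rewrite !inE andbA.
Qed.

Section RequirementsForest.

Variables (n : nat) (S : {set {set 'I_n}}).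
Hypothesis S_pairs : forall e, e \in S -> is_2fi e.
Hypothesis S_acyclic : req_acyclic S.

Local Notation adj := (req_adj S).

Lemma adj_sym x y : adj x y = adj y x.
Proof. by rewrite /req_adj setUC. Qed.

Lemma adj_irrefl x : ~~ adj x x.
Proof. by apply/negP => /S_pairs; rewrite /is_2fi setUid cards1. Qed.

(* A simple path x, p, r_1, ..., r_k has no chord from x to any r_i: it would
   close a cycle of length at least three. *)
Lemma path_no_chord x p r y :
  path adj x (p :: r) -> uniq (x :: p :: r) -> y \in r -> ~~ adj x y.
Proof.
move=> xpr_path xpr_uniq y_r; apply/negP => xy.
case/splitPr: y_r xpr_path xpr_uniq => r1 r2 xpr_path xpr_uniq.
have cyc_size : 3 <= size (x :: p :: rcons r1 y) by rewrite /= size_rcons.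
have cyc_uniq : uniq (x :: p :: rcons r1 y).
  apply: subseq_uniq xpr_uniq.
  by rewrite -(cat_rcons y r1 r2) -!cat_cons; apply: prefix_subseq.
apply: (negP (S_acyclic cyc_size cyc_uniq)).
rewrite /= rcons_path last_rcons [adj y x]adj_sym xy andbT.
by move: xpr_path; rewrite /= cat_path rcons_path /= => /and3P[-> -> /andP[]].
Qed.

Definition upath (U : {set 'I_n}) (x : 'I_n) (t : seq 'I_n) : bool :=
  [&& uniq (x :: t), all (fun z => z \in U) (x :: t) & path adj x t].

Definition longest_upath (U : {set 'I_n}) (x : 'I_n) (t : seq 'I_n) : Prop :=
  upath U x t /\ forall x' t', upath U x' t' -> size t' <= size t.

Lemma upath_mem (U : {set 'I_n}) x t z : upath U x t -> z \in x :: t -> z \in U.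
Proof. by rewrite /upath => /and3P[_ /allP xt_in _] /xt_in. Qed.

Lemma upath_cons (U : {set 'I_n}) x t y :
  upath U x t -> y \in U -> y \notin x :: t -> adj y x -> upath U y (x :: t).
Proof.
rewrite /upath => /and3P[xt_uniq xt_in xt_path] yU y_fresh yx.
apply/and3P; split; first by rewrite cons_uniq y_fresh.
  by move: xt_in; rewrite /= yU.
by rewrite /= yx.
Qed.

Lemma upath_behead (U : {set 'I_n}) x p r : upath U x (p :: r) -> upath U p r.
Proof.
rewrite /upath => /and3P[/andP[_ pr_uniq] /andP[_ pr_in] /andP[_ pr_path]].
by apply/and3P.
Qed.

(* Paths have at most n vertices, so a nonempty U contains a longest path. *)
Lemma longest_upath_exists (U : {set 'I_n}) x0 : x0 \in U -> exists x t, longest_upath U x t.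
Proof.
move=> x0U.
pose has_len m := [exists x, exists t : m.-tuple 'I_n, upath U x t].
have len0 : exists m, has_len m.
  by exists 0; apply/existsP; exists x0; apply/existsP; exists [tuple];
     rewrite /upath /= x0U.
have len_bound m : has_len m -> m <= n.
  case/existsP => x /existsP[t]; rewrite /upath => /and3P[xt_uniq _ _].
  have := max_card (mem (x :: t)).
  by rewrite card_ord (card_uniqP xt_uniq) /= size_tuple => /ltnW.
case: (ex_maxnP len0 len_bound) => m /existsP[x /existsP[t xt]] longest.
exists x, t; split=> // x' t' x't'; rewrite size_tuple; apply: longest.
by apply/existsP; exists x'; apply/existsP; exists (in_tuple t').
Qed.

(* In a longest path x :: t inside U, the only neighbour of x in U is the
   successor of x: any other one would extend the path or close a cycle. *)
Lemma longest_upath_start (U : {set 'I_n}) x t y :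
  longest_upath U x t -> y \in U -> adj x y -> ohead t = Some y.
Proof.
move=> [xt longest] yU xy.
have [y_on|y_fresh] := boolP (y \in x :: t); last first.
  by have := longest _ _ (upath_cons xt yU y_fresh (etrans (adj_sym _ _) xy));
     rewrite /= ltnn.
case: t xt longest y_on => [|p r] xt _; rewrite !inE.
  by move/eqP=> yx; rewrite yx (negbTE (adj_irrefl _)) in xy.
case/and3P: xt => xpr_uniq _ xpr_path.
case/or3P=> [/eqP yx|/eqP -> //|y_r].
  by rewrite yx (negbTE (adj_irrefl _)) in xy.
by rewrite (negbTE (path_no_chord xpr_path xpr_uniq y_r)) in xy.
Qed.

Definition deg_in (A : {set 'I_n}) (x : 'I_n) : nat := #|[set y in A | adj x y]|.

Lemma deg_in_le (A : {set 'I_n}) x (B : {set 'I_n}) :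
  (forall y, y \in A -> adj x y -> y \in B) -> deg_in A x <= #|B|.
Proof.
by move=> AB; apply/subset_leq_card/subsetP => y; rewrite inE => /andP[/AB].
Qed.

Lemma deg_in0 (A : {set 'I_n}) x :
  (forall y, y \in A -> ~~ adj x y) -> deg_in A x = 0.
Proof.
move=> A_nadj; apply/eqP; rewrite cards_eq0; apply/eqP/setP => y.
by rewrite !inE; case: (boolP (y \in A)) => //= /A_nadj /negbTE.
Qed.

Lemma deg_in_subset (A B : {set 'I_n}) x : A \subset B -> deg_in A x <= deg_in B x.
Proof.
move=> /subsetP AB; apply: deg_in_le => y yA xy.
by rewrite inE (AB _ yA) xy.
Qed.

(* Every nonempty subset of a forest contains a vertex with at most one
   neighbour inside it: the start of a longest path. *)
Lemma forest_leaf (W : {set 'I_n}) : W != set0 -> exists2 z, z \in W & deg_in W z <= 1.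
Proof.
case/set0Pn => x0 x0W; have [x [t xt]] := longest_upath_exists x0W.
exists x; first by apply: (upath_mem xt.1); rewrite inE eqxx.
apply/card_le1_eqP => y1 y2; rewrite !inE => /andP[y1W xy1] /andP[y2W xy2].
by have := longest_upath_start xt y2W xy2; rewrite (longest_upath_start xt y1W xy1) => -[].
Qed.

Hypothesis S_deg : forall j, req_degree S j <= 4.

(* A factor lies in as many interactions of S as it has neighbours. *)
Lemma nbrs_le4 x : #|[set y | adj x y]| <= 4.
Proof.
apply: leq_trans (S_deg x); rewrite /req_degree.
rewrite -(@card_in_imset _ _ (fun y => [set x; y])); last first.
  move=> y1 y2; rewrite !inE => xy1 _ /setP/(_ y1).
  rewrite !inE eqxx orbT => /esym/orP[/eqP y1x|/eqP //].
  by rewrite y1x (negbTE (adj_irrefl _)) in xy1.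
apply/subset_leq_card/subsetP => e /imsetP[y]; rewrite !inE => xy ->.
by rewrite -[_ \in S]/(adj x y) xy !inE eqxx.
Qed.

(* Such factors can always be given three distinct colours compatible with
   any colouring of the rest of U. *)
Definition good_triple (U : {set 'I_n}) (t1 t2 t3 : 'I_n) : Prop :=
  [/\ [/\ t1 \in U, t2 \in U & t3 \in U], [/\ t1 != t2, t2 != t3 & t3 != t1],
      deg_in (U :\: [set t1; t2; t3]) t1 <= 2,
      deg_in (U :\: [set t1; t2; t3]) t2 <= 1 &
      deg_in (U :\: [set t1; t2; t3]) t3 = 0].

Section LongestPathEnd.

Variables (U : {set 'I_n}) (x p : 'I_n) (r : seq 'I_n).
Hypothesis xpr : longest_upath U x (p :: r).

Let xU : x \in U. Proof. by apply: (upath_mem xpr.1); rewrite inE eqxx. Qed.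
Let pU : p \in U. Proof. by apply: (upath_mem xpr.1); rewrite !inE eqxx orbT. Qed.
Let xpr_uniq : uniq (x :: p :: r). Proof. by case/and3P: xpr.1. Qed.
Let x_adj_p : adj x p. Proof. by case/and3P: xpr.1 => _ _ /andP[]. Qed.
Let xp : x != p. Proof. by move: xpr_uniq; rewrite /= inE negb_or => /and3P[/andP[]]. Qed.

(* x has no neighbour in U besides p, so none outside a set containing p. *)
Lemma deg_start0 (T : {set 'I_n}) : p \in T -> deg_in (U :\: T) x = 0.
Proof.
move=> pT; apply: deg_in0 => y; rewrite !inE => /andP[yT yU].
apply: contra yT => xy.
by have [<-] := longest_upath_start xpr yU xy.
Qed.

(* If p has a neighbour q in U off the path, then (p, q, x) is good: p loses
   its neighbours x and q, while q has no further neighbour in U. *)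
Lemma good_triple_branch q :
  q \in U -> adj p q -> q \notin x :: p :: r -> good_triple U p q x.
Proof.
move=> qU pq q_fresh.
have qpr : upath U q (p :: r).
  by apply: upath_cons (upath_behead xpr.1) qU _ _; rewrite 1?adj_sym //;
     apply: contra q_fresh => q_pr; rewrite inE q_pr orbT.
have [pq' qx] : p != q /\ q != x.
  by split; apply: contraNneq q_fresh => ->; rewrite !inE eqxx ?orbT.
split=> //; last by apply: deg_start0; rewrite !inE eqxx.
- apply: leq_trans (deg_in_le (B := [set y | adj p y] :\: [set x; q]) _) _.
    by move=> y; rewrite !inE !negb_or => /andP[/andP[/andP[_ ->] ->] _] ->.
  rewrite cardsD (setIidPr _); last first.
    by apply/subsetP => y; rewrite !inE => /orP[] /eqP ->; rewrite // adj_sym.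
  by rewrite cards2 eq_sym qx leq_subLR (leq_trans (nbrs_le4 p)).
- rewrite (deg_in0 _) // => y; rewrite !inE !negb_or => /andP[/andP[/andP[yp yq] yx] yU].
  have [y_on|y_fresh] := boolP (y \in q :: p :: r).
    move: y_on; rewrite !inE (negbTE yq) (negbTE yp) /= => y_r.
    by case/and3P: qpr => qpr_uniq _ qpr_path; exact: path_no_chord qpr_path qpr_uniq y_r.
  apply/negP => qy; have := xpr.2 _ _ (upath_cons qpr yU y_fresh (etrans (adj_sym _ _) qy)).
  by rewrite /= ltnn.
Qed.

(* Otherwise a factor z with at most one neighbour in U \ {x, p} makes
   (z, p, x) good: the only remaining neighbour of p is its successor. *)
Lemma good_triple_leaf :
  3 <= #|U| -> {in U, forall q, adj p q -> q \in x :: p :: r} ->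
  exists z, good_triple U z p x.
Proof.
move=> U3 p_nbrs.
have xpU : [set x; p] \subset U by apply/subsetP => y; rewrite !inE => /orP[] /eqP ->.
have W0 : U :\: [set x; p] != set0.
  by rewrite -card_gt0 cardsD (setIidPr xpU) cards2 xp subn_gt0.
have [z zW z_leaf] := forest_leaf W0.
move: (zW); rewrite !inE !negb_or => /andP[/andP[zx zp] zU].
exists z; split=> //; last by apply: deg_start0; rewrite !inE eqxx ?orbT.
- by split; rewrite // eq_sym.
- apply: leq_trans (deg_in_subset _ _) (leq_trans z_leaf _) => //.
  by apply: setDS; apply/subsetP => y; rewrite !inE => /orP[] ->; rewrite ?orbT.
- apply: leq_trans (deg_in_le (B := [set head p r]) _) _; last by rewrite cards1.
  move=> y; rewrite !inE !negb_or => /andP[/andP[/andP[_ yp] yx] yU] py.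
  move: (p_nbrs y yU py); rewrite !inE (negbTE yx) (negbTE yp) /=.
  case: r xpr_uniq xpr => [|p2 r'] // _ [/and3P[/andP[_ pr_uniq] _ /andP[_ pr_path]] _].
  rewrite inE => /orP[//|y_r'].
  by rewrite (negbTE (path_no_chord pr_path pr_uniq y_r')) in py.
Qed.

End LongestPathEnd.

(* Any set of at least three factors contains a good triple: take a longest
   path x, p, ...; if U has no edges any three factors do, otherwise branch
   at p or fall back on a leaf of U \ {x, p}. *)
Lemma good_triple_exists (U : {set 'I_n}) :
  3 <= #|U| -> exists t1 t2 t3, good_triple U t1 t2 t3.
Proof.
move=> U3; have [x0 x0U] : exists x0, x0 \in U by apply/card_gt0P; exact: ltnW (ltnW U3).
have [x [[|p r] xt]] := longest_upath_exists x0U.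
  have U_edgeless a : a \in U -> forall y, y \in U -> ~~ adj a y.
    move=> aU y yU; apply/negP => ay.
    have ay_path : upath U a [:: y].
      rewrite /upath /= aU yU ay inE !andbT.
      by apply: contraTneq ay => ->; exact: adj_irrefl.
    by have := xt.2 _ _ ay_path.
  case/card_gt2P: U3 => a [b [c [[aU bU cU] abc]]].
  by exists a, b, c; split=> //; rewrite deg_in0 // => y;
     rewrite inE => /andP[_]; apply: U_edgeless.
have [/existsP[q /and3P[qU pq q_fresh]]|no_branch] :=
  boolP [exists q, [&& q \in U, adj p q & q \notin x :: p :: r]].
  by exists p, q, x; exact: (good_triple_branch xt).
have p_nbrs : {in U, forall q, adj p q -> q \in x :: p :: r}.
  move=> q qU pq; apply/negPn/negP => q_fresh; apply: (negP no_branch).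
  by apply/existsP; exists q; rewrite qU pq q_fresh.
by have [z ?] := good_triple_leaf xt U3 p_nbrs; exists z, p, x.
Qed.

Definition proper (U : {set 'I_n}) (f : 'I_n -> 'I_3) : Prop :=
  {in U &, forall x y, adj x y -> f x != f y}.

Definition balanced (U : {set 'I_n}) (f : 'I_n -> 'I_3) : Prop :=
  forall c : 'I_3, #|[set x in U | f x == c]| = #|U| %/ 3 + (c < #|U| %% 3).

Section RecolourTriple.

Variables (U : {set 'I_n}) (t1 t2 t3 : 'I_n) (f : 'I_n -> 'I_3).
Hypothesis t123 : good_triple U t1 t2 t3.
Let T := [set t1; t2; t3].
Let U0 := U :\: T.
Hypotheses (f_proper : proper U0 f) (f_balanced : balanced U0 f).

Let forbidden t := f @: [set y in U0 | adj t y].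

Variables c1 c2 c3 : 'I_3.
Hypothesis c123 : [/\ c1 != c2, c2 != c3 & c3 != c1].
Let g x := if x == t1 then c1 else if x == t2 then c2 else if x == t3 then c3 else f x.

Let t_in : [/\ t1 \in U, t2 \in U & t3 \in U]. Proof. by case: t123. Qed.
Let t_neq : [/\ t1 != t2, t2 != t3 & t3 != t1]. Proof. by case: t123. Qed.

Let g_T : [/\ g t1 = c1, g t2 = c2 & g t3 = c3].
Proof.
case: t_neq => t12 t23 t31.
by rewrite /g eqxx eq_sym (negbTE t12) eqxx (negbTE t31) eq_sym (negbTE t23) eqxx.
Qed.

Let g_off y : y \notin T -> g y = f y.
Proof. by rewrite /g !inE !negb_or => /andP[/andP[/negbTE -> /negbTE ->] /negbTE ->]. Qed.

(* Each class gains exactly one factor of T while #|U| = #|U0| + 3. *)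
Lemma recoloured_balanced : balanced U g.
Proof.
case: t_in t_neq g_T => t1U t2U t3U [t12 t23 t31] [g1 g2 g3].
have U_card : #|U| = #|U0| + 3.
  have TU : T \subset U by apply/subsetP => y; rewrite !inE => /orP[/orP[]|] /eqP->.
  have T_card : #|T| = 3.
    by rewrite /T -setUA cardsU1 cards2 t23 !inE negb_or t12 eq_sym t31.
  by rewrite /U0 cardsD (setIidPr TU) T_card subnK // -T_card subset_leq_card.
move=> c.
have t2U' : t2 \in U :\ t1 by rewrite !inE eq_sym t12 t2U.
have t3U' : t3 \in U :\ t1 :\ t2 by rewrite !inE eq_sym t23 t31 t3U.
rewrite (class_del _ _ t1U) (class_del _ _ t2U') (class_del _ _ t3U') g1 g2 g3.
have -> : [set x in U :\ t1 :\ t2 :\ t3 | g x == c] = [set x in U0 | f x == c].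
  apply/setP => x; rewrite !inE -!andbA; have [xT|xT] := boolP (x \in T).
    by move: xT; rewrite !inE => /orP[/orP[]|] /eqP->; rewrite !eqxx ?orbT /= ?andbF.
  by move: (xT); rewrite (g_off xT) !inE !negb_or => /andP[/andP[-> ->] ->].
rewrite f_balanced !addnA distinct_colours_cover // U_card.
by rewrite modnDr divnDr ?dvdnn // divnn [1 + _]addnC.
Qed.

Hypotheses (c1F : c1 \notin forbidden t1) (c2F : c2 \notin forbidden t2)
           (c3F : c3 \notin forbidden t3).

(* An edge from T either stays inside T, where colours are distinct, or goes
   to U0, where the colour of its endpoint was forbidden. *)
Let T_nbr x y : x \in T -> y \in U -> adj x y -> g x != g y.
Proof.
case: c123 g_T => c12 c23 c31 [g1 g2 g3] xT yU xy.
have [yT|yT] := boolP (y \in T).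
  move: xT yT xy; rewrite !inE => /orP[/orP[]|] /eqP-> /orP[/orP[]|] /eqP->;
    by rewrite ?g1 ?g2 ?g3 ?(negbTE (adj_irrefl _)) // eq_sym.
have yU0 : y \in U0 by rewrite inE yT yU.
rewrite (g_off yT); move: xT xy; rewrite !inE => /orP[/orP[]|] /eqP-> xy;
  rewrite ?g1 ?g2 ?g3.
- by apply: contra c1F => /eqP ->; apply: imset_f; rewrite inE yU0 xy.
- by apply: contra c2F => /eqP ->; apply: imset_f; rewrite inE yU0 xy.
- by apply: contra c3F => /eqP ->; apply: imset_f; rewrite inE yU0 xy.
Qed.

Lemma recoloured_proper : proper U g.
Proof.
move=> x y xU yU xy; have [xT|xT] := boolP (x \in T); first exact: T_nbr.
have [yT|yT] := boolP (y \in T); first by rewrite eq_sym T_nbr // adj_sym.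
by rewrite !g_off //; apply: f_proper; rewrite // inE ?xT ?yT.
Qed.

End RecolourTriple.

(* A proper balanced colouring of U minus a good triple extends to U: the
   factors of the triple have at most 2, 1, 0 forbidden colours. *)
Lemma recolour_triple (U : {set 'I_n}) t1 t2 t3 f :
  good_triple U t1 t2 t3 -> proper (U :\: [set t1; t2; t3]) f ->
  balanced (U :\: [set t1; t2; t3]) f -> exists g, proper U g /\ balanced U g.
Proof.
move=> t123 f_proper f_balanced; case: (t123) => _ _ deg1 deg2 deg3.
set forbidden := fun t => f @: [set y in U :\: [set t1; t2; t3] | adj t y].
have forb3 : #|forbidden t3| = 0.
  by apply/eqP; rewrite -leqn0; apply: leq_trans (leq_imset_card _ _) (eq_leq deg3).
have [c1 [c2 [c3 [c1F c2F c3F c123]]]] := distinct_colours_avoiding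
  (leq_trans (leq_imset_card _ _) deg1 : #|forbidden t1| <= 2)
  (leq_trans (leq_imset_card _ _) deg2 : #|forbidden t2| <= 1) forb3.
eexists; split; first exact: recoloured_proper c1F c2F c3F.
exact: recoloured_balanced c123.
Qed.

(* On a set of at most two factors, a new factor a takes the colour #|U :\ a|,
   which is still unused there. *)
Lemma recolour_small (U : {set 'I_n}) a f :
  a \in U -> #|U| <= 2 -> proper (U :\ a) f -> balanced (U :\ a) f ->
  exists g, proper U g /\ balanced U g.
Proof.
move=> aU U_small f_proper f_balanced.
have U_card : #|U| = #|U :\ a|.+1 by rewrite (cardsD1 a U) aU.
pose w : 'I_3 := inord #|U :\ a|.
have w_val : w = #|U :\ a| :> nat by rewrite /w inordK //; lia.
have w_unused y : y \in U :\ a -> f y != w.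
  move=> yUa; apply: contraTneq isT => fy.
  have := f_balanced w; rewrite w_val divn_small ?modn_small ?ltnn; try lia.
  by move/eqP; rewrite cards_eq0 => /eqP/setP/(_ y); rewrite inE yUa fy eqxx inE.
pose g x := if x == a then w else f x.
exists g; split.
  move=> x y xU yU xy; rewrite /g.
  have [xa|xa] := eqVneq x a; have [ya|ya] := eqVneq y a.
  - by rewrite xa ya (negbTE (adj_irrefl _)) in xy.
  - by rewrite eq_sym w_unused // !inE ya.
  - by rewrite w_unused // !inE xa.
  - by apply: f_proper; rewrite // !inE ?xa ?ya.
move=> c; rewrite (class_del _ _ aU) /g eqxx.
have -> : [set x in U :\ a | (if x == a then w else f x) == c] = [set x in U :\ a | f x == c].
  by apply/setP => x; rewrite !inE; case: eqP.
have -> : (w == c) = (#|U :\ a| == c) by rewrite -w_val.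
rewrite f_balanced U_card; move: U_small; rewrite U_card.
by case: #|U :\ a| => [|[|?]] // _; case: c => -[|[|[|?]]].
Qed.

(* Every set of factors has a proper balanced 3-colouring: peel off a good
   triple while at least three factors remain, then single factors. *)
Lemma balanced_colouring (U : {set 'I_n}) : exists f, proper U f /\ balanced U f.
Proof.
have [m] := ubnP #|U|; elim: m U => // m IH U U_lt.
have [U3|U_small] := leqP 3 #|U|.
  have [t1 [t2 [t3 t123]]] := good_triple_exists U3.
  have U0_lt : #|U :\: [set t1; t2; t3]| < m.
    case: t123 => -[t1U _ _] _ _ _ _; rewrite -ltnS (leq_trans _ U_lt) // ltnS.
    by apply/proper_card/properP; split; [exact: subsetDl | exists t1; rewrite // !inE eqxx].
  have [f [f_proper f_balanced]] := IH _ U0_lt.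
  exact: recolour_triple f_proper f_balanced.
have [U0|[a aU]] := set_0Vmem U.
  exists (fun=> ord0); split; first by move=> x y; rewrite U0 inE.
  move=> c; rewrite U0 cards0 div0n mod0n ltn0 addn0.
  by apply/eqP; rewrite cards_eq0; apply/eqP/setP => x; rewrite !inE.
have Ua_lt : #|U :\ a| < m by rewrite (cardsD1 a U) aU in U_lt.
have [f [f_proper f_balanced]] := IH _ Ua_lt.
exact: recolour_small aU _ f_proper f_balanced.
Qed.

End RequirementsForest.

(* The three nonzero vectors (1,0), (0,1) and (1,1) of GF(2)^2, one per colour. *)
Definition colour_vec (c : 'I_3) : 'cV['F_2]_2 :=
  \col_i ((c == i :> nat) || (c == 2 :> nat))%:R%R.

Lemma colour_vec_inj : injective colour_vec.
Proof.
move=> c d /matrixP cd; move: (cd ord0 ord0) (cd (inord 1) ord0) => {cd}.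
rewrite !mxE !inordK //.
by case: c => -[|[|[|?]]] ?; case: d => -[|[|[|?]]] ? //= _ _; apply: val_inj.
Qed.

Lemma colour_vec_neq0 c : colour_vec c != 0%R.
Proof.
apply/negP => /eqP/matrixP c0; move: (c0 ord0 ord0) (c0 (inord 1) ord0) => {c0}.
by rewrite !mxE !inordK //; case: c => -[|[|[|?]]].
Qed.

Definition colour_design n (f : 'I_n -> 'I_3) : 'M['F_2]_(2, n) :=
  \matrix_(i, j) colour_vec (f j) i ord0.

Lemma col_colour_design n (f : 'I_n -> 'I_3) j : col j (colour_design f) = colour_vec (f j).
Proof. by apply/matrixP => i k; rewrite !mxE. Qed.

Lemma colour_design_estimable n (f : 'I_n -> 'I_3) j k :
  int_estimable (colour_design f) j k = (f j != f k).
Proof. by rewrite /int_estimable !col_colour_design (inj_eq colour_vec_inj). Qed.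

Lemma rank_colsub (F : fieldType) m n n' (g : 'I_n' -> 'I_n) (A : 'M[F]_(m, n)) :
  \rank (colsub g A) <= \rank A.
Proof.
have -> : colsub g A = (A *m colsub g 1%:M)%R by rewrite mulmx_colsub mulmx1.
exact: mxrankM_maxl.
Qed.

(* If colours 0 and 1 both occur, two columns of the design form the identity
   matrix, so the design has rank 2. *)
Lemma colour_design_rank n (f : 'I_n -> 'I_3) j0 j1 :
  f j0 = 0 :> nat -> f j1 = 1 :> nat -> \rank (colour_design f) = 2.
Proof.
move=> fj0 fj1; apply/eqP; rewrite eqn_leq rank_leq_row /=.
pose g (k : 'I_2) := if k == ord0 then j0 else j1.
suff id_cols : colsub g (colour_design f) = 1%:M%R.
  by apply: leq_trans (rank_colsub g _); rewrite id_cols mxrank1.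
apply/matrixP => i k; rewrite !mxE /g.
by case: i => -[|[|?]] ?; case: k => -[|[|?]] ? //=; rewrite ?fj0 ?fj1.
Qed.

Lemma card_bigcup_disjoint (T : finType) k (F : 'I_k -> {set T}) :
  (forall i j, i != j -> [disjoint F i & F j]) ->
  #|\bigcup_(i < k) F i| = \sum_(i < k) #|F i|.
Proof.
elim: k F => [|k IH] F F_disj; first by rewrite !big_ord0 cards0.
rewrite !big_ord_recr /= cardsU IH; last by move=> i j ij; apply: F_disj.
suff -> : (\bigcup_(i < k) F (widen_ord (leqnSn k) i)) :&: F ord_max = set0.
  by rewrite cards0 subn0.
apply/disjoint_setI0; rewrite disjoint_sym; apply: bigcup_disjoint => i _.
by apply: F_disj; rewrite -val_eqE /= neq_ltn ltn_ord orbT.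
Qed.

Definition colour_class n (f : 'I_n -> 'I_3) (c : 'I_3) : {set 'I_n} :=
  [set x | f x == c].

Definition class_pairs n (f : 'I_n -> 'I_3) (c : 'I_3) : {set {set 'I_n}} :=
  [set e : {set 'I_n} | e \subset colour_class f c & #|e| == 2].

Lemma class_pairs_pair n (f : 'I_n -> 'I_3) c a b :
  a != b -> ([set a; b] \in class_pairs f c) = (f a == c) && (f b == c).
Proof.
move=> ab; rewrite inE cards2 ab andbT.
apply/subsetP/andP => [ab_c|[fa fb] y]; last by rewrite !inE => /orP[] /eqP->.
by split; [have := ab_c a | have := ab_c b]; rewrite !inE eqxx ?orbT; apply.
Qed.

Lemma colour_design_estimable_pair n (f : 'I_n -> 'I_3) a b :
  int_estimable_set (colour_design f) [set a; b] = (f a != f b).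
Proof.
apply/existsP/idP => [[j /existsP[k]]|fab]; last first.
  by exists a; apply/existsP; exists b; rewrite !inE !eqxx orbT colour_design_estimable.
rewrite !inE colour_design_estimable.
by case/and3P => /orP[] /eqP-> /orP[] /eqP->; rewrite ?eqxx // eq_sym.
Qed.

(* Exactly the interactions inside a colour class are not estimable, hence
   phi = C(n, 2) - sum_c C(|class c|, 2). *)
Lemma num_estimable_colour_design n (f : 'I_n -> 'I_3) :
  num_estimable_2fi (colour_design f) =
  'C(n, 2) - \sum_(c < 3) 'C(#|colour_class f c|, 2).
Proof.
rewrite /num_estimable_2fi; set mono := \bigcup_(c < 3) class_pairs f c.
have mono_pairs : mono \subset [set e : {set 'I_n} | #|e| == 2].
  by apply/bigcupsP => c _; apply/subsetP => e; rewrite !inE => /andP[_ ->].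
have -> : [set e | is_2fi e && int_estimable_set (colour_design f) e] =
          [set e : {set 'I_n} | #|e| == 2] :\: mono.
  apply/setP => e; rewrite !inE /is_2fi [RHS]andbC.
  case e2 : (#|e| == 2); rewrite //=; case/cards2P: e2 => a [b [ab ->]].
  rewrite colour_design_estimable_pair; congr negb.
  apply/eqP/bigcupP => [fab|[c _]]; last by rewrite class_pairs_pair // => /andP[/eqP-> /eqP->].
  by exists (f b); rewrite // class_pairs_pair // fab eqxx.
rewrite cardsD (setIidPr mono_pairs) card_draws card_ord card_bigcup_disjoint.
  by congr (_ - _); apply: eq_bigr => c _; rewrite cards_draws.
move=> c d cd; rewrite -setI_eq0; apply/eqP/setP => e; rewrite !inE.
apply/negP => /andP[/andP[/subsetP ec /eqP e2] /andP[/subsetP ed _]].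
have [x xe] : exists x, x \in e by apply/card_gt0P; rewrite e2.
by move: (ec x xe) (ed x xe) cd; rewrite !inE => /eqP-> /eqP->; rewrite eqxx.
Qed.

(* With v = n %/ 3 and w = n %% 3, the balanced classes have sizes v + 1
   (w of them) and v (3 - w of them), giving the optimum phi_max. *)
Lemma balanced_estimable_count n :
  'C(n, 2) - \sum_(c < 3) 'C(n %/ 3 + (c < n %% 3), 2) = phi_max n.
Proof.
rewrite /phi_max !big_ord_recr big_ord0 /=.
have binS1 v : 'C(v + 1, 2) = 'C(v, 2) + v by rewrite addn1 binS bin1.
have : n %% 3 < 3 by rewrite ltn_mod.
by case: (n %% 3) => [|[|[|w]]] //= _; rewrite ?addn0 ?binS1; lia.
Qed.

Theorem corollary6 (n : nat) (S : {set {set 'I_n}}) :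
  2 <= n ->
  (forall e, e \in S -> is_2fi e) ->
  req_acyclic S ->
  (forall j : 'I_n, req_degree S j <= 4) ->
  exists X : 'M['F_2]_(2, n),
    [/\ blocked_design X,
        (forall j : 'I_n, main_estimable X j),
        (forall e, e \in S -> int_estimable_set X e) &
        num_estimable_2fi X = phi_max n].
Proof.
move=> n2 S_pairs S_acyclic S_deg.
have [f [f_proper f_balanced]] := balanced_colouring S_pairs S_acyclic S_deg [set: 'I_n].
have class_card c : #|colour_class f c| = n %/ 3 + (c < n %% 3).
  by rewrite -[n in RHS]card_ord -cardsT -f_balanced; apply: eq_card => x; rewrite !inE.
have class_inhabited (c : 'I_3) : c < 2 -> exists j, f j = c.
  move=> c2; have /card_gt0P[j] : 0 < #|colour_class f c| by rewrite class_card; lia.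
  by rewrite inE => /eqP; exists j.
exists (colour_design f); split.
- have [j0 fj0] := class_inhabited ord0 isT.
  have [j1 fj1] : exists j, f j = inord 1 by apply: class_inhabited; rewrite inordK.
  by apply: (colour_design_rank (j0 := j0) (j1 := j1)); rewrite ?fj0 ?fj1 ?inordK.
- by move=> j; rewrite /main_estimable col_colour_design colour_vec_neq0.
- move=> e eS; have /cards2P[a [b [ab e_ab]]] := S_pairs _ eS.
  rewrite e_ab colour_design_estimable_pair; apply: f_proper; rewrite ?inE //.
  by rewrite /req_adj -e_ab.
- rewrite num_estimable_colour_design -balanced_estimable_count.
  by congr (_ - _); apply: eq_bigr => c _; rewrite class_card.
Qed.
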